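(* Let $g_*$ be the standard metric on $\mathbb{S}^2$, let $f>0$ be a smooth function on $[a,b]$, and consider the metric $\gamma=ds^2+f(s)^2g_*$ on $[a,b]\times\mathbb{S}^2$. Suppose (1) $\gamma$ has positive scalar curvature; (2) $\Sigma_b:=\{b\}\times\mathbb{S}^2$ has positive mean curvature; and (3) $\mathfrak{m}_{_H}(\Sigma_b)\ge 0$. Then for any $m_e>\mathfrak{m}_{_H}(\Sigma_b)$ there exists a smooth, rotationally symmetric, asymptotically flat Riemannian $3$-manifold $M$ with boundary $\partial M$ and non-negative scalar curvature such that (i) outside a compact set, $M$ is isometric to a spatial Schwarzschild manifold of mass $m_e$; (ii) $\partial M$ has a neighborhood $U$ isometric to $\left([a,\frac{a+b}{2})\times\mathbb{S}^2,\gamma\right)$; and (iii) if $f'>0$ on $[a,b]$, then $M$ can be constructed such that every rotationally symmetric sphere in $M$ has positive constant mean curvature.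
   Context: The mean curvature of $\Sigma_b$ is computed with respect to the unit normal $\partial_s$ (so it equals $2f'(b)/f(b)$). The Hawking mass of a closed surface $S$ with induced metric and mean curvature $H$ is $\mathfrak{m}_{_H}(S)=\sqrt{\frac{|S|}{16\pi}}\left(1-\frac{1}{16\pi}\int_S H^2\,d\sigma\right)$; for $\Sigma_b$ it equals $\frac{f(b)}{2}(1-f'(b)^2)$. The spatial Schwarzschild manifold of mass $m>0$ is $\left((2m,\infty)\times\mathbb{S}^2,\ \frac{1}{1-2m/r}dr^2+r^2g_*\right)$. *)

From Stdlib Require Import Reals.
From Coquelicot Require Import Coquelicot.
Open Scope R_scope.

(* A rotationally symmetric (warped product) metric  ds^2 + F(s)^2 g_star  on
   I x S^2 is encoded by its warping function F : R -> R.
   Smooth functions on closed intervals are represented by smooth functions on R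
   (every smooth function on a closed interval extends smoothly, Seeley). *)
Definition smooth (F : R -> R) : Prop := forall (n : nat) (x : R), ex_derive_n F n x.

Definition warped_scal (F : R -> R) (s : R) : R :=
  2 * (1 - (Derive F s) ^ 2) / (F s) ^ 2 - 4 * Derive (Derive F) s / F s.

Definition warped_mean_curv (F : R -> R) (s : R) : R := 2 * Derive F s / F s.

Definition warped_hawking_mass (F : R -> R) (s : R) : R :=
  F s / 2 * (1 - (Derive F s) ^ 2).

(* Spatial Schwarzschild of mass m, ((2m,oo) x S^2, dr^2/(1-2m/r) + r^2 g_star),
   written in arclength coordinate s: ds^2 + r(s)^2 g_star with r' = sqrt(1 - 2m/r). *)
Definition schwarzschild_end (m : R) (F : R -> R) (s0 : R) : Prop :=
  forall s, s0 <= s -> 2 * m < F s /\ Derive F s = sqrt (1 - 2 * m / F s).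

(* Describe the extension along the old parameter t by an area radius R(t) and a prescribed
   Hawking mass M(t).  R equals f on a collar below b and then grows linearly; M equals the
   Hawking mass f (1 - f'^2) / 2 of f on the collar, is frozen at its value at b, and is raised
   to m_e once R > 2 m_e.  Reparametrizing by the arclength s with ds/dt = R' / sqrt (1 - 2M/R)
   gives a warped product F = R o t(s) with F'^2 = 1 - 2M/F, i.e. whose Hawking mass is M.
   Since (F (1 - F'^2) / 2)' = F' F^2 Scal / 4, the scalar curvature is nonnegative wherever M
   is nondecreasing, which holds because Scal f > 0 makes the Hawking mass of f increase on
   the collar; where M = m_e the metric is Schwarzschild. *)

From Stdlib Require Import Reals.
From Coquelicot Require Import Coquelicot.
Open Scope R_scope.
From Stdlib Require Import Lra Lia ClassicalEpsilon Ranalysis5.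

Set Bullet Behavior "Strict Subproofs".

(** * Smooth functions *)

Definition Cn (n : nat) (f : R -> R) : Prop := forall k x, (k <= n)%nat -> ex_derive_n f k x.

Lemma Cn_0 f : Cn 0 f.
Proof. intros [|k] x Hk; [exact I | lia]. Qed.

Lemma Derive_n_Derive f k x : Derive_n (Derive f) k x = Derive_n f (S k) x.
Proof. rewrite <- Nat.add_1_r. exact (Derive_n_comp f k 1 x). Qed.

Lemma Cn_S f n : (forall x, ex_derive f x) -> Cn n (Derive f) -> Cn (S n) f.
Proof.
  intros Hf Hf' [|k] x Hk; [exact I|].
  destruct k as [|k]; [exact (Hf x)|].
  eapply ex_derive_ext; [|exact (Hf' (S k) x ltac:(lia))].
  intros t. apply Derive_n_Derive.
Qed.

Lemma Cn_S_inv f n : Cn (S n) f -> (forall x, ex_derive f x) /\ Cn n (Derive f).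
Proof.
  intros Hf. split; [intros x; exact (Hf 1%nat x ltac:(lia))|].
  intros [|k] x Hk; [exact I|].
  eapply ex_derive_ext; [|exact (Hf (S (S k)) x ltac:(lia))].
  intros t. symmetry. apply Derive_n_Derive.
Qed.

Lemma Cn_le n f : Cn (S n) f -> Cn n f.
Proof. intros Hf k x Hk. apply Hf. lia. Qed.

Lemma Cn_ext n f g : (forall x, f x = g x) -> Cn n f -> Cn n g.
Proof. intros E Hf k x Hk. eapply ex_derive_n_ext; [exact E|]. now apply Hf. Qed.

Lemma smooth_Cn f : smooth f <-> forall n, Cn n f.
Proof.
  split; [intros Hf n k x _; apply Hf|].
  intros Hf n x. exact (Hf n n x (Nat.le_refl n)).
Qed.

Lemma Cn_const n c : Cn n (fun _ => c).
Proof. intros k x _. apply ex_derive_n_const. Qed.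

Lemma Cn_id n : Cn n (fun x => x).
Proof.
  intros k x _. eapply ex_derive_n_ext; [|apply (ex_derive_n_pow k 1)].
  intros t. simpl. ring.
Qed.

Lemma Cn_scal n a f : Cn n f -> Cn n (fun x => a * f x).
Proof. intros Hf k x Hk. apply ex_derive_n_scal_l. now apply Hf. Qed.

Lemma Cn_plus n : forall f g, Cn n f -> Cn n g -> Cn n (fun x => f x + g x).
Proof.
  induction n as [|n IH]; intros f g Hf Hg; [apply Cn_0|].
  destruct (Cn_S_inv _ _ Hf) as [Df Hf'], (Cn_S_inv _ _ Hg) as [Dg Hg'].
  apply Cn_S; [intros x; now apply (ex_derive_plus f g)|].
  eapply Cn_ext; [|exact (IH _ _ Hf' Hg')].
  intros x. now rewrite Derive_plus.
Qed.

Lemma Cn_mult n : forall f g, Cn n f -> Cn n g -> Cn n (fun x => f x * g x).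
Proof.
  induction n as [|n IH]; intros f g Hf Hg; [apply Cn_0|].
  destruct (Cn_S_inv _ _ Hf) as [Df Hf'], (Cn_S_inv _ _ Hg) as [Dg Hg'].
  apply Cn_S; [intros x; now apply ex_derive_mult|].
  eapply Cn_ext; [|apply Cn_plus; [exact (IH _ _ Hf' (Cn_le _ _ Hg)) | exact (IH _ _ (Cn_le _ _ Hf) Hg')]].
  intros x. now rewrite Derive_mult.
Qed.

Lemma Cn_comp n : forall f g, Cn n f -> Cn n g -> Cn n (fun x => f (g x)).
Proof.
  induction n as [|n IH]; intros f g Hf Hg; [apply Cn_0|].
  destruct (Cn_S_inv _ _ Hf) as [Df Hf'], (Cn_S_inv _ _ Hg) as [Dg Hg'].
  apply Cn_S; [intros x; now apply ex_derive_comp|].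
  eapply Cn_ext; [|exact (Cn_mult _ _ _ (IH _ _ Hf' (Cn_le _ _ Hg)) Hg')].
  intros x. rewrite Derive_comp by auto. ring.
Qed.

Lemma Cn_inv n : forall f, (forall x, f x <> 0) -> Cn n f -> Cn n (fun x => / f x).
Proof.
  induction n as [|n IH]; intros f Hf0 Hf; [apply Cn_0|].
  destruct (Cn_S_inv _ _ Hf) as [Df Hf'].
  apply Cn_S; [intros x; now apply ex_derive_inv|].
  assert (Hi := IH f Hf0 (Cn_le _ _ Hf)).
  eapply Cn_ext; [|exact (Cn_scal _ (-1) _ (Cn_mult _ _ _ Hf' (Cn_mult _ _ _ Hi Hi)))].
  intros x. rewrite Derive_inv by auto. field. auto.
Qed.

Lemma Cn_sqrt n : forall f, (forall x, 0 < f x) -> Cn n f -> Cn n (fun x => sqrt (f x)).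
Proof.
  induction n as [|n IH]; intros f Hf0 Hf; [apply Cn_0|].
  destruct (Cn_S_inv _ _ Hf) as [Df Hf'].
  assert (Hs : forall x, 0 < sqrt (f x)) by (intros x; apply sqrt_lt_R0, Hf0).
  assert (Hd : forall x, is_derive (fun x => sqrt (f x)) x (Derive f x * (/ 2 * / sqrt (f x)))).
  { intros x. auto_derive; [split; [apply Df | split; [apply Hf0 | exact I]]|].
    rewrite Rmult_1_l, Rinv_mult. reflexivity. }
  apply Cn_S; [intros x; eexists; apply Hd|].
  assert (Hi := Cn_inv _ _ (fun x => Rgt_not_eq _ _ (Hs x)) (IH f Hf0 (Cn_le _ _ Hf))).
  eapply Cn_ext; [|exact (Cn_mult _ _ _ Hf' (Cn_scal _ (/ 2) _ Hi))].
  intros x. symmetry. apply is_derive_unique, Hd.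
Qed.

Lemma smooth_const c : smooth (fun _ => c).
Proof. apply smooth_Cn. intros n. apply Cn_const. Qed.

Lemma smooth_id : smooth (fun x => x).
Proof. apply smooth_Cn. intros n. apply Cn_id. Qed.

Lemma smooth_plus f g : smooth f -> smooth g -> smooth (fun x => f x + g x).
Proof. rewrite !smooth_Cn. intros Hf Hg n. now apply Cn_plus. Qed.

Lemma smooth_mult f g : smooth f -> smooth g -> smooth (fun x => f x * g x).
Proof. rewrite !smooth_Cn. intros Hf Hg n. now apply Cn_mult. Qed.

Lemma smooth_minus f g : smooth f -> smooth g -> smooth (fun x => f x - g x).
Proof.
  intros Hf Hg. apply smooth_plus; [exact Hf|].
  apply smooth_Cn. intros n. eapply Cn_ext; [|apply (Cn_scal n (-1)), smooth_Cn, Hg].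
  intros x. lra.
Qed.

Lemma smooth_comp f g : smooth f -> smooth g -> smooth (fun x => f (g x)).
Proof. rewrite !smooth_Cn. intros Hf Hg n. now apply Cn_comp. Qed.

Lemma smooth_div f g : (forall x, g x <> 0) -> smooth f -> smooth g -> smooth (fun x => f x / g x).
Proof.
  rewrite !smooth_Cn. intros Hg0 Hf Hg n. apply Cn_mult; [apply Hf | now apply Cn_inv].
Qed.

Lemma smooth_sqrt f : (forall x, 0 < f x) -> smooth f -> smooth (fun x => sqrt (f x)).
Proof. rewrite !smooth_Cn. intros Hf0 Hf n. now apply Cn_sqrt. Qed.

Lemma smooth_Derive f : smooth f -> smooth (Derive f).
Proof. rewrite !smooth_Cn. intros Hf n. exact (proj2 (Cn_S_inv f n (Hf (S n)))). Qed.

Lemma smooth_ex_derive f x : smooth f -> ex_derive f x.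
Proof. intros Hf. exact (Hf 1%nat x). Qed.

Lemma smooth_continuity f x : smooth f -> continuity_pt f x.
Proof. intros Hf. apply continuity_pt_filterlim, (ex_derive_continuous f x), smooth_ex_derive, Hf. Qed.

Lemma smooth_of_derive S J : smooth J -> (forall t, is_derive S t (J t)) -> smooth S.
Proof.
  rewrite smooth_Cn. intros HJ HS. apply smooth_Cn. intros [|n]; [apply Cn_0|].
  apply Cn_S; [intros x; eexists; apply HS|].
  eapply Cn_ext; [|exact (HJ n)]. intros x. symmetry. apply is_derive_unique, HS.
Qed.

(** * A smooth step function *)

Lemma exp_dominates_pow k eps : 0 < eps ->
  exists M, 0 < M /\ forall y, M <= y -> y ^ k * exp (- y) <= eps.
Proof.
  intros Heps. set (C := INR (Factorial.fact (S k))).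
  assert (HC : 0 < C) by apply INR_fact_lt_0.
  exists (Rmax 1 (C / eps)). split; [apply Rlt_le_trans with 1; [lra | apply Rmax_l]|].
  intros y Hy. assert (H1 : 1 <= y) by exact (Rle_trans _ _ _ (Rmax_l _ _) Hy).
  assert (H2 : C / eps <= y) by exact (Rle_trans _ _ _ (Rmax_r _ _) Hy).
  assert (Htaylor : y ^ S k / C <= exp y).
  { eapply Rle_trans; [|apply (exp_ge_taylor y (S k)); lra].
    rewrite tech5. enough (0 <= sum_f_R0 (fun i => y ^ i / INR (Factorial.fact i)) k) by (unfold C; lra).
    apply cond_pos_sum. intros i. apply Rle_mult_inv_pos; [apply pow_le; lra | apply INR_fact_lt_0]. }
  assert (Hyk : 0 < y ^ k) by (apply pow_lt; lra).
  assert (Hexp : 0 < exp y) by apply exp_pos.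
  rewrite exp_Ropp. simpl in Htaylor.
  apply Rle_trans with (C / y).
  - apply Rmult_le_reg_r with (exp y * y / C); [apply Rdiv_lt_0_compat; nra|].
    replace (y ^ k * / exp y * (exp y * y / C)) with (y * y ^ k / C) by (field; lra).
    replace (C / y * (exp y * y / C)) with (exp y) by (field; lra). exact Htaylor.
  - apply Rmult_le_reg_r with (y / eps); [apply Rdiv_lt_0_compat; lra|].
    replace (C / y * (y / eps)) with (C / eps) by (field; lra).
    replace (eps * (y / eps)) with y by (field; lra). exact H2.
Qed.

Inductive poly_fun : (R -> R) -> Prop :=
| poly_fun_const c : poly_fun (fun _ => c)
| poly_fun_plus P Q : poly_fun P -> poly_fun Q -> poly_fun (fun y => P y + Q y)
| poly_fun_scal c P : poly_fun P -> poly_fun (fun y => c * P y)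
| poly_fun_mulx P : poly_fun P -> poly_fun (fun y => y * P y).

Lemma poly_fun_derive P : poly_fun P -> exists P', poly_fun P' /\ forall y, is_derive P y (P' y).
Proof.
  induction 1 as [c | P Q _ [P' [HP' DP]] _ [Q' [HQ' DQ]] | c P _ [P' [HP' DP]] | P HP [P' [HP' DP]]].
  - exists (fun _ => 0). split; [apply poly_fun_const | intros y; apply (is_derive_const c)].
  - exists (fun y => P' y + Q' y). split; [now constructor|].
    intros y. now apply (is_derive_plus P Q).
  - exists (fun y => c * P' y). split; [now constructor|].
    intros y. now apply (is_derive_scal P).
  - exists (fun y => P y + y * P' y). split; [constructor; [|constructor]; assumption|].
    intros y. auto_derive; [apply (ex_intro _ _ (DP y)) | ].
    replace (Derive (fun x : R => P x) y) with (P' y) by (symmetry; apply is_derive_unique, DP). ring.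
Qed.

Lemma poly_fun_exp_decay P : poly_fun P -> forall k eps, 0 < eps ->
  exists M, 0 < M /\ forall y, M <= y -> Rabs (y ^ k * P y) * exp (- y) <= eps.
Proof.
  assert (Hscal : forall c (Q : R -> R) k eps, 0 < eps ->
    (forall eps', 0 < eps' ->
       exists M, 0 < M /\ forall y, M <= y -> Rabs (y ^ k * Q y) * exp (- y) <= eps') ->
    exists M, 0 < M /\ forall y, M <= y -> Rabs (y ^ k * (c * Q y)) * exp (- y) <= eps).
  { intros c Q k eps Heps HQ.
    assert (Hc : 0 < Rabs c + 1) by (generalize (Rabs_pos c); lra).
    destruct (HQ (eps / (Rabs c + 1))) as [M [HM HMy]]; [now apply Rdiv_lt_0_compat|].
    exists M. split; [exact HM|]. intros y Hy.
    replace (y ^ k * (c * Q y)) with (c * (y ^ k * Q y)) by ring.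
    rewrite Rabs_mult, Rmult_assoc.
    apply Rle_trans with (Rabs c * (eps / (Rabs c + 1))).
    - apply Rmult_le_compat_l; [apply Rabs_pos | exact (HMy y Hy)].
    - apply Rmult_le_reg_r with (Rabs c + 1); [exact Hc|].
      replace (Rabs c * (eps / (Rabs c + 1)) * (Rabs c + 1)) with (Rabs c * eps) by (field; lra).
      generalize (Rabs_pos c); nra. }
  induction 1 as [c | P Q _ IHP _ IHQ | c P _ IHP | P _ IHP]; intros k eps Heps.
  - destruct (Hscal c (fun _ => 1) k eps Heps) as [M [HM HMy]].
    + intros eps' Heps'. destruct (exp_dominates_pow k eps' Heps') as [M [HM HMy]].
      exists M. split; [exact HM|]. intros y Hy.
      rewrite Rmult_1_r, Rabs_pos_eq by (apply pow_le; lra). exact (HMy y Hy).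
    + exists M. split; [exact HM|]. intros y Hy. specialize (HMy y Hy).
      rewrite Rmult_1_r in HMy. exact HMy.
  - destruct (IHP k (eps / 2)) as [M1 [HM1 H1]]; [lra|].
    destruct (IHQ k (eps / 2)) as [M2 [HM2 H2]]; [lra|].
    exists (Rmax M1 M2). split; [apply Rlt_le_trans with M1; [exact HM1 | apply Rmax_l]|].
    intros y Hy.
    specialize (H1 y (Rle_trans _ _ _ (Rmax_l _ _) Hy)). specialize (H2 y (Rle_trans _ _ _ (Rmax_r _ _) Hy)).
    assert (Hexp : 0 < exp (- y)) by apply exp_pos.
    replace (y ^ k * (P y + Q y)) with (y ^ k * P y + y ^ k * Q y) by ring.
    apply Rle_trans with ((Rabs (y ^ k * P y) + Rabs (y ^ k * Q y)) * exp (- y)); [|lra].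
    apply Rmult_le_compat_r; [lra | apply Rabs_triang].
  - exact (Hscal c P k eps Heps (IHP k)).
  - destruct (IHP (S k) eps Heps) as [M [HM HMy]]. exists M. split; [exact HM|].
    intros y Hy. replace (y ^ k * (y * P y)) with (y ^ S k * P y) by (simpl; ring). auto.
Qed.

Definition exp_inv_poly (P : R -> R) (x : R) : R :=
  if Rlt_dec 0 x then P (/ x) * exp (- / x) else 0.

Definition exp_inv_poly_dpoly (P P' : R -> R) (y : R) : R := y * (y * (P y + -1 * P' y)).

Lemma poly_fun_exp_inv_poly_dpoly P P' : poly_fun P -> poly_fun P' -> poly_fun (exp_inv_poly_dpoly P P').
Proof. intros HP HP'. do 2 apply poly_fun_mulx. now apply poly_fun_plus, poly_fun_scal. Qed.

Lemma is_derive_exp_inv_poly (P P' : R -> R) : poly_fun P -> (forall y, is_derive P y (P' y)) ->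
  forall x : R, is_derive (exp_inv_poly P) x (exp_inv_poly (exp_inv_poly_dpoly P P') x).
Proof.
  intros HP DP x. destruct (Rlt_dec 0 x) as [Hx | Hx].
  - apply (is_derive_ext_loc (fun x => P (/ x) * exp (- / x)) (exp_inv_poly P)).
    { apply (locally_interval _ x 0 p_infty Hx I). intros y Hy _. unfold exp_inv_poly.
      destruct (Rlt_dec 0 y); [reflexivity | simpl in Hy; lra]. }
    unfold exp_inv_poly, exp_inv_poly_dpoly. destruct (Rlt_dec 0 x); [|lra].
    auto_derive; [repeat split; [eexists; apply DP | lra | lra] |].
    replace (Derive (fun x : R => P x) (/ x)) with (P' (/ x)) by (symmetry; apply is_derive_unique, DP).
    field. lra.
  - destruct (Rlt_dec x 0) as [Hx' | Hx'].
    + apply is_derive_ext_loc with (f := fun _ => 0).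
      { apply (locally_interval _ x m_infty 0 I Hx'). intros y _ Hy. unfold exp_inv_poly.
        destruct (Rlt_dec 0 y); [simpl in Hy; lra | reflexivity]. }
      unfold exp_inv_poly. destruct (Rlt_dec 0 x); [lra|]. apply (is_derive_const 0).
    + assert (x = 0) by lra. subst x.
      unfold exp_inv_poly at 2. destruct (Rlt_dec 0 0); [lra|].
      apply is_derive_Reals. intros eps Heps.
      destruct (poly_fun_exp_decay P HP 1 (eps / 2)) as [M [HM HMy]]; [lra|].
      exists (mkposreal (/ M) (Rinv_0_lt_compat _ HM)). simpl. intros h Hh0 Hh.
      rewrite Rplus_0_l. unfold exp_inv_poly. destruct (Rlt_dec 0 0); [lra|].
      destruct (Rlt_dec 0 h) as [Hhp | Hhn].
      * rewrite Rabs_pos_eq in Hh by lra.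
        assert (HMh : M <= / h).
        { rewrite <- (Rinv_inv M). apply Rinv_le_contravar; lra. }
        specialize (HMy (/ h) HMh). simpl in HMy. rewrite Rmult_1_r in HMy.
        replace ((P (/ h) * exp (- / h) - 0) / h - 0) with (/ h * P (/ h) * exp (- / h)) by (field; lra).
        rewrite Rabs_mult, (Rabs_pos_eq (exp _)) by (apply Rlt_le, exp_pos). lra.
      * replace ((0 - 0) / h - 0) with 0 by (field; auto). rewrite Rabs_R0. lra.
Qed.

Lemma exp_inv_poly_Cn n : forall P, poly_fun P -> Cn n (exp_inv_poly P).
Proof.
  induction n as [|n IH]; intros P HP; [apply Cn_0|].
  destruct (poly_fun_derive P HP) as [P' [HP' DP]].
  assert (D := is_derive_exp_inv_poly P P' HP DP).
  apply Cn_S; [intros x; eexists; apply D|].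
  eapply Cn_ext; [|exact (IH _ (poly_fun_exp_inv_poly_dpoly P P' HP HP'))].
  intros x. symmetry. apply is_derive_unique, D.
Qed.

Definition exp_inv : R -> R := exp_inv_poly (fun _ => 1).

Lemma exp_inv_smooth : smooth exp_inv.
Proof. apply smooth_Cn. intros n. apply exp_inv_poly_Cn, poly_fun_const. Qed.

Lemma exp_inv_eq0 x : x <= 0 -> exp_inv x = 0.
Proof. intros Hx. unfold exp_inv, exp_inv_poly. destruct (Rlt_dec 0 x); [lra | reflexivity]. Qed.

Lemma exp_inv_pos x : 0 < x -> 0 < exp_inv x.
Proof.
  intros Hx. unfold exp_inv, exp_inv_poly. destruct (Rlt_dec 0 x); [|lra].
  rewrite Rmult_1_l. apply exp_pos.
Qed.

Lemma exp_inv_ge0 x : 0 <= exp_inv x.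
Proof.
  destruct (Rle_dec x 0); [rewrite exp_inv_eq0; lra | apply Rlt_le, exp_inv_pos; lra].
Qed.

Lemma Derive_exp_inv x :
  Derive exp_inv x = exp_inv_poly (exp_inv_poly_dpoly (fun _ => 1) (fun _ => 0)) x.
Proof.
  apply is_derive_unique, is_derive_exp_inv_poly; [apply poly_fun_const|].
  intros y. apply (is_derive_const 1).
Qed.

Lemma Derive_exp_inv_ge0 x : 0 <= Derive exp_inv x.
Proof.
  rewrite Derive_exp_inv. unfold exp_inv_poly, exp_inv_poly_dpoly.
  destruct (Rlt_dec 0 x); [|lra].
  apply Rmult_le_pos; [|apply Rlt_le, exp_pos].
  replace (/ x * (/ x * (1 + -1 * 0))) with (/ x * / x) by ring. apply Rle_0_sqr.
Qed.

Lemma Derive_exp_inv_eq0 x : x <= 0 -> Derive exp_inv x = 0.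
Proof.
  intros Hx. rewrite Derive_exp_inv. unfold exp_inv_poly.
  destruct (Rlt_dec 0 x); [lra | reflexivity].
Qed.

Definition step (x : R) : R := exp_inv x / (exp_inv x + exp_inv (1 - x)).

Lemma step_denom_pos x : 0 < exp_inv x + exp_inv (1 - x).
Proof.
  destruct (Rlt_dec 0 x).
  - generalize (exp_inv_pos x r) (exp_inv_ge0 (1 - x)). lra.
  - generalize (exp_inv_pos (1 - x) ltac:(lra)) (exp_inv_ge0 x). lra.
Qed.

Lemma step_smooth : smooth step.
Proof.
  apply smooth_div; [intros x; generalize (step_denom_pos x); lra | exact exp_inv_smooth|].
  apply smooth_plus; [exact exp_inv_smooth|].
  apply (smooth_comp exp_inv (fun x => 1 - x) exp_inv_smooth).
  apply smooth_minus; [apply smooth_const | apply smooth_id].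
Qed.

Lemma Derive_step x : Derive step x =
  (Derive exp_inv x * exp_inv (1 - x) + exp_inv x * Derive exp_inv (1 - x))
  / (exp_inv x + exp_inv (1 - x)) ^ 2.
Proof.
  assert (Hd := step_denom_pos x). assert (He := fun y => smooth_ex_derive exp_inv y exp_inv_smooth).
  apply is_derive_unique. unfold step. unfold Rminus in *. auto_derive; [repeat split; try apply He; lra|].
  change (Derive (fun x0 : R => exp_inv x0)) with (Derive exp_inv). field. lra.
Qed.

Lemma step_eq0 x : x <= 0 -> step x = 0.
Proof. intros Hx. unfold step. rewrite exp_inv_eq0 by exact Hx. unfold Rdiv. ring. Qed.

Lemma step_eq1 x : 1 <= x -> step x = 1.
Proof.
  intros Hx. unfold step. rewrite (exp_inv_eq0 (1 - x)) by lra.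
  generalize (exp_inv_pos x ltac:(lra)). intros. field. lra.
Qed.

Lemma step_ge0 x : 0 <= step x.
Proof. apply Rle_mult_inv_pos; [apply exp_inv_ge0 | apply step_denom_pos]. Qed.

Lemma step_le1 x : step x <= 1.
Proof.
  unfold step. assert (Hd := step_denom_pos x). generalize (exp_inv_ge0 (1 - x)). intros.
  apply Rmult_le_reg_r with (exp_inv x + exp_inv (1 - x)); [exact Hd|].
  unfold Rdiv. rewrite Rmult_assoc, Rinv_l by lra. lra.
Qed.

Lemma Derive_step_ge0 x : 0 <= Derive step x.
Proof.
  rewrite Derive_step. apply Rle_mult_inv_pos; [|apply pow_lt, step_denom_pos].
  generalize (exp_inv_ge0 x) (exp_inv_ge0 (1 - x)) (Derive_exp_inv_ge0 x) (Derive_exp_inv_ge0 (1 - x)).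
  intros. nra.
Qed.

Lemma Derive_step_eq0 x : x <= 0 \/ 1 <= x -> Derive step x = 0.
Proof.
  intros Hx. rewrite Derive_step.
  destruct Hx as [Hx | Hx].
  - rewrite (exp_inv_eq0 x), (Derive_exp_inv_eq0 x) by exact Hx. unfold Rdiv. ring.
  - rewrite (exp_inv_eq0 (1 - x)), (Derive_exp_inv_eq0 (1 - x)) by lra. unfold Rdiv. ring.
Qed.

Definition cutoff (t0 w t : R) : R := step ((t - t0) / w).

Section Cutoff.
Variables t0 w : R.
Hypothesis w_pos : 0 < w.

Lemma cutoff_smooth : smooth (cutoff t0 w).
Proof.
  apply (smooth_comp step (fun t => (t - t0) / w) step_smooth).
  apply smooth_div; [intros; lra | | apply smooth_const].
  apply smooth_minus; [apply smooth_id | apply smooth_const].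
Qed.

Lemma cutoff_eq0 t : t <= t0 -> cutoff t0 w t = 0.
Proof.
  intros Ht. apply step_eq0. unfold Rdiv.
  apply Rmult_le_0_r; [lra | apply Rlt_le, Rinv_0_lt_compat, w_pos].
Qed.

Lemma cutoff_eq1 t : t0 + w <= t -> cutoff t0 w t = 1.
Proof. intros Ht. apply step_eq1. apply Rcomplements.Rle_div_r; lra. Qed.

Lemma cutoff_ge0 t : 0 <= cutoff t0 w t.
Proof. apply step_ge0. Qed.

Lemma cutoff_le1 t : cutoff t0 w t <= 1.
Proof. apply step_le1. Qed.

Lemma Derive_cutoff t : Derive (cutoff t0 w) t = Derive step ((t - t0) / w) / w.
Proof.
  unfold cutoff. rewrite Derive_comp; [| apply smooth_ex_derive, step_smooth | auto_derive; lra].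
  replace (Derive (fun t => (t - t0) / w) t) with (/ w).
  - unfold Rdiv. ring.
  - symmetry. apply is_derive_unique. auto_derive; [lra | field; lra].
Qed.

Lemma Derive_cutoff_ge0 t : 0 <= Derive (cutoff t0 w) t.
Proof. rewrite Derive_cutoff. apply Rle_mult_inv_pos; [apply Derive_step_ge0 | exact w_pos]. Qed.

Lemma Derive_cutoff_eq0 t : t <= t0 \/ t0 + w <= t -> Derive (cutoff t0 w) t = 0.
Proof.
  intros Ht. rewrite Derive_cutoff, Derive_step_eq0; [unfold Rdiv; ring|].
  destruct Ht as [Ht | Ht]; [left | right].
  - unfold Rdiv. apply Rmult_le_0_r; [lra | apply Rlt_le, Rinv_0_lt_compat, w_pos].
  - apply Rcomplements.Rle_div_r; lra.
Qed.

End Cutoff.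

(** * Calculus on the line *)

Lemma Derive_ext_interval (F G : R -> R) (lo hi : Rbar) (x : R) :
  Rbar_lt lo x -> Rbar_lt x hi -> (forall y : R, Rbar_lt lo y -> Rbar_lt y hi -> F y = G y) ->
  Derive F x = Derive G x.
Proof. intros Hlo Hhi E. apply Derive_ext_loc, (locally_interval _ x lo hi Hlo Hhi), E. Qed.

Lemma warped_scal_ext_interval (F G : R -> R) (lo hi : Rbar) (x : R) :
  Rbar_lt lo x -> Rbar_lt x hi -> (forall y : R, Rbar_lt lo y -> Rbar_lt y hi -> F y = G y) ->
  warped_scal F x = warped_scal G x.
Proof.
  intros Hlo Hhi E. unfold warped_scal.
  rewrite (E x Hlo Hhi), (Derive_ext_interval F G lo hi x Hlo Hhi E).
  rewrite (Derive_ext_interval (Derive F) (Derive G) lo hi x Hlo Hhi); [reflexivity|].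
  intros y Hly Hyh. exact (Derive_ext_interval F G lo hi y Hly Hyh E).
Qed.

Lemma mean_value S x y : smooth S -> x <= y ->
  exists z, x <= z <= y /\ S y - S x = Derive S z * (y - x).
Proof.
  intros HS Hxy. destruct (MVT_gen S x y (Derive S)) as [z [Hz E]].
  - intros t _. apply Derive_correct, smooth_ex_derive, HS.
  - intros t _. apply smooth_continuity, HS.
  - rewrite Rmin_left, Rmax_right in Hz by exact Hxy. now exists z.
Qed.

Lemma strict_incr_of_Derive_pos S : smooth S -> (forall t, 0 < Derive S t) ->
  forall x y, x < y -> S x < S y.
Proof.
  intros HS Hpos x y Hxy. destruct (mean_value S x y HS (Rlt_le _ _ Hxy)) as [z [_ E]].
  specialize (Hpos z). nra.
Qed.

Lemma eq_id_of_Derive_eq1 S t0 : smooth S -> S t0 = t0 ->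
  (forall t, t <= t0 -> Derive S t = 1) -> forall t, t <= t0 -> S t = t.
Proof.
  intros HS H0 H1 t Ht. destruct (mean_value S t t0 HS Ht) as [z [Hz E]].
  rewrite H1 in E by lra. lra.
Qed.

Lemma surjective_of_Derive_ge1 S t1 t2 : smooth S ->
  (forall t, t <= t1 \/ t2 <= t -> 1 <= Derive S t) -> forall s, exists t, S t = s.
Proof.
  intros HS H1 s.
  set (lo := t1 - Rabs s - Rabs (S t1) - 1). set (hi := t2 + Rabs s + Rabs (S t2) + 1).
  assert (Hlo : S lo < s).
  { destruct (mean_value S lo t1 HS) as [z [Hz E]];
      [unfold lo; generalize (Rabs_pos s) (Rabs_pos (S t1)); lra|].
    assert (Hz1 := H1 z (or_introl (proj2 Hz))).
    generalize (Rle_abs (- s)) (Rle_abs (S t1)). rewrite Rabs_Ropp. unfold lo in *. nra. }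
  assert (Hhi : s < S hi).
  { destruct (mean_value S t2 hi HS) as [z [Hz E]];
      [unfold hi; generalize (Rabs_pos s) (Rabs_pos (S t2)); lra|].
    assert (Hz1 := H1 z (or_intror (proj1 Hz))).
    generalize (Rle_abs s) (Rle_abs (- S t2)). rewrite Rabs_Ropp. unfold hi in *. nra. }
  destruct (IVT_gen S lo hi s) as [t [_ Ht]]; [|split|exists t; exact Ht].
  - intros x. apply smooth_continuity, HS.
  - apply Rle_trans with (S lo); [apply Rmin_l | lra].
  - apply Rle_trans with (S hi); [lra | apply Rmax_r].
Qed.

Lemma smooth_inverse S : smooth S -> (forall t, 0 < Derive S t) -> (forall s, exists t, S t = s) ->
  exists T, smooth T /\ (forall s, S (T s) = s) /\ (forall t, T (S t) = t) /\
    (forall s, Derive T s = / Derive S (T s)).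
Proof.
  intros HS Hpos Hsurj.
  assert (Hinc := strict_incr_of_Derive_pos S HS Hpos).
  assert (Hle : forall x y, S x <= S y -> x <= y).
  { intros x y H. destruct (Rle_dec x y) as [|Hxy]; [assumption|].
    assert (S y < S x) by (apply Hinc; lra). lra. }
  destruct (choice (fun s t => S t = s) Hsurj) as [T HST].
  assert (HTS : forall t, T (S t) = t) by (intros t; apply Rle_antisym; apply Hle; rewrite HST; lra).
  assert (HTd : forall s, is_derive T s (/ Derive S (T s))).
  { intros s.
    assert (HTs : T (s - 1) <= T s <= T (s + 1)) by (split; apply Hle; rewrite !HST; lra).
    assert (Hc : continuity_pt T s).
    { apply (continuity_pt_recip_interv S T (T s - 1) (T s + 1)); [lra | | | | |].
      - intros x y _ Hxy _. now apply Hinc.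
      - intros x _ _. apply HST.
      - intros x H1 H2. split; apply Hle; rewrite HST; assumption.
      - intros a _. apply smooth_continuity, HS.
      - rewrite <- (HST s) at 2 3. split; apply Hinc; lra. }
    assert (HD := derivable_pt_lim_recip_interv S T (s - 1) (s + 1) s
      (fun a _ => ex_derive_Reals_0 S a (smooth_ex_derive S a HS)) Hc ltac:(lra) ltac:(lra) HTs
      (fun x _ => HST x)).
    rewrite Derive_Reals in HD. specialize (Hpos (T s)).
    apply is_derive_Reals. rewrite <- Rdiv_1_l. apply HD. lra. }
  exists T. split; [|split; [exact HST | split; [exact HTS|]]].
  - apply smooth_Cn. intros n. induction n as [|n IH]; [apply Cn_0|].
    apply Cn_S; [intros x; eexists; apply HTd|].
    eapply Cn_ext; [|apply Cn_inv; [| apply Cn_comp; [apply smooth_Cn, smooth_Derive, HS | exact IH]]].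
    + intros x. symmetry. apply is_derive_unique, HTd.
    + intros x. specialize (Hpos (T x)). lra.
  - intros s. apply is_derive_unique, HTd.
Qed.

Lemma is_derive_primitive (J : R -> R) t0 c t : smooth J ->
  is_derive (fun t => c + RInt J t0 t) t (J t).
Proof.
  intros HJ. assert (HJc : forall z, continuous J z) by
    (intros z; apply (ex_derive_continuous J z), smooth_ex_derive, HJ).
  rewrite <- (Rplus_0_l (J t)).
  apply (is_derive_plus (fun _ => c) (fun t => RInt J t0 t)); [apply (is_derive_const c)|].
  apply (is_derive_RInt J (fun t => RInt J t0 t) t0 t); [|exact (HJc t)].
  apply filter_forall. intros u. apply (@RInt_correct R_CompleteNormedModule).
  apply ex_RInt_continuous. intros z _. exact (HJc z).
Qed.

Lemma smooth_near f x eps : smooth f -> 0 < eps ->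
  exists delta, 0 < delta /\ forall y, Rabs (y - x) < delta -> Rabs (f y - f x) < eps.
Proof.
  intros Hf Heps. destruct (smooth_continuity f x Hf eps Heps) as [delta [Hdelta H]].
  exists delta. split; [exact Hdelta|]. intros y Hy.
  destruct (Req_dec y x) as [-> | Hne]; [rewrite Rminus_diag, Rabs_R0; exact Heps|].
  exact (H y (conj (conj I (not_eq_sym Hne)) Hy)).
Qed.

Lemma smooth_shift P a : smooth P -> smooth (fun s => P (a + s)).
Proof. intros HP. apply (smooth_comp P), smooth_plus; [exact HP | apply smooth_const | apply smooth_id]. Qed.

Lemma Derive_shift P a s : smooth P -> Derive (fun s => P (a + s)) s = Derive P (a + s).
Proof.
  intros HP. apply is_derive_unique. auto_derive; [apply smooth_ex_derive, HP | apply Rmult_1_l].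
Qed.

(** * Warped products *)

Lemma is_derive_warped_hawking_mass F x : ex_derive F x -> ex_derive (Derive F) x -> F x <> 0 ->
  is_derive (warped_hawking_mass F) x (Derive F x * F x ^ 2 * warped_scal F x / 4).
Proof.
  intros HF HF' HF0. unfold warped_hawking_mass, warped_scal. auto_derive; [tauto|].
  change (Derive (fun x0 : R => F x0)) with (Derive F).
  change (Derive (fun x0 : R => Derive F x0)) with (Derive (Derive F)).
  field. exact HF0.
Qed.

Lemma Derive_warped_hawking_mass F x : smooth F -> F x <> 0 ->
  Derive (warped_hawking_mass F) x = Derive F x * F x ^ 2 * warped_scal F x / 4.
Proof.
  intros HF HF0. apply is_derive_unique, is_derive_warped_hawking_mass; [| |exact HF0].
  - apply smooth_ex_derive, HF.
  - apply smooth_ex_derive, smooth_Derive, HF.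
Qed.

Lemma warped_scal_nonneg_of_hawking_mass F x : smooth F -> 0 < F x -> 0 < Derive F x ->
  0 <= Derive (warped_hawking_mass F) x -> 0 <= warped_scal F x.
Proof.
  intros HF HF0 HF1. rewrite Derive_warped_hawking_mass by (auto; lra). intros H.
  assert (0 < Derive F x * F x ^ 2) by (apply Rmult_lt_0_compat; [exact HF1 | apply pow_lt, HF0]).
  nra.
Qed.

Lemma warped_scal_shift P a s : smooth P -> warped_scal (fun s => P (a + s)) s = warped_scal P (a + s).
Proof.
  intros HP. unfold warped_scal. rewrite Derive_shift by exact HP.
  rewrite (Derive_ext (Derive (fun s => P (a + s))) (fun s => Derive P (a + s)))
    by (intros; now apply Derive_shift).
  now rewrite Derive_shift by (apply smooth_Derive, HP).
Qed.

(** * Blending and gluing *)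

Definition blend (k A B : R -> R) (t : R) : R := (1 - k t) * A t + k t * B t.

Lemma blend_smooth k A B : smooth k -> smooth A -> smooth B -> smooth (blend k A B).
Proof.
  intros Hk HA HB. unfold blend.
  apply smooth_plus; apply smooth_mult; auto. apply smooth_minus; [apply smooth_const | exact Hk].
Qed.

Lemma Derive_blend k A B t : smooth k -> smooth A -> smooth B ->
  Derive (blend k A B) t = Derive k t * (B t - A t) + (1 - k t) * Derive A t + k t * Derive B t.
Proof.
  intros Hk HA HB. apply is_derive_unique. unfold blend.
  auto_derive; [repeat split; apply smooth_ex_derive; assumption|].
  change (Derive (fun x : R => k x)) with (Derive k).
  change (Derive (fun x : R => A x)) with (Derive A).
  change (Derive (fun x : R => B x)) with (Derive B). ring.
Qed.

Section CutoffBlend.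
Variables (t0 w : R) (A B : R -> R).
Hypothesis w_pos : 0 < w.

Lemma blend_cutoff_left t : t <= t0 -> blend (cutoff t0 w) A B t = A t.
Proof. intros Ht. unfold blend. rewrite cutoff_eq0 by assumption. ring. Qed.

Lemma blend_cutoff_right t : t0 + w <= t -> blend (cutoff t0 w) A B t = B t.
Proof. intros Ht. unfold blend. rewrite cutoff_eq1 by assumption. ring. Qed.

Lemma Derive_blend_cutoff_left t : smooth A -> smooth B -> t <= t0 ->
  Derive (blend (cutoff t0 w) A B) t = Derive A t.
Proof.
  intros HA HB Ht. rewrite Derive_blend by (auto; apply cutoff_smooth, w_pos).
  rewrite cutoff_eq0, Derive_cutoff_eq0 by auto. ring.
Qed.

Lemma Derive_blend_cutoff_right t : smooth A -> smooth B -> t0 + w <= t ->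
  Derive (blend (cutoff t0 w) A B) t = Derive B t.
Proof.
  intros HA HB Ht. rewrite Derive_blend by (auto; apply cutoff_smooth, w_pos).
  rewrite cutoff_eq1, Derive_cutoff_eq0 by auto. ring.
Qed.

Lemma blend_cutoff_gt C t : C < A t -> C < B t -> C < blend (cutoff t0 w) A B t.
Proof.
  intros HA HB. unfold blend. generalize (cutoff_ge0 t0 w t) (cutoff_le1 t0 w t). intros.
  destruct (Rle_lt_dec (cutoff t0 w t) (1 / 2)); nra.
Qed.

Lemma blend_cutoff_ge C t : C <= A t -> C <= B t -> C <= blend (cutoff t0 w) A B t.
Proof. intros HA HB. unfold blend. generalize (cutoff_ge0 t0 w t) (cutoff_le1 t0 w t). nra. Qed.

Lemma blend_cutoff_lt C t : A t < C -> B t < C -> blend (cutoff t0 w) A B t < C.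
Proof.
  intros HA HB. unfold blend. generalize (cutoff_ge0 t0 w t) (cutoff_le1 t0 w t). intros.
  destruct (Rle_lt_dec (cutoff t0 w t) (1 / 2)); nra.
Qed.

End CutoffBlend.

Definition glue (A B : R -> R) (c x : R) : R := if Rle_dec x c then A x else B x.

Section Glue.
Variables (A B : R -> R) (lo c hi : R).
Hypothesis lo_c_hi : lo < c < hi.
Hypothesis A_eq_B : forall x, lo < x < hi -> A x = B x.

Lemma glue_eq_left x : x < hi -> glue A B c x = A x.
Proof. intros Hx. unfold glue. destruct (Rle_dec x c); [reflexivity|]. symmetry. apply A_eq_B. lra. Qed.

Lemma glue_eq_right x : lo < x -> glue A B c x = B x.
Proof. intros Hx. unfold glue. destruct (Rle_dec x c); [apply A_eq_B; lra | reflexivity]. Qed.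

Lemma smooth_glue : smooth A -> smooth B -> smooth (glue A B c).
Proof.
  intros HA HB n x. destruct (Rlt_dec x hi) as [Hx | Hx].
  - apply ex_derive_n_ext_loc with A; [|apply HA].
    apply (locally_interval _ x m_infty hi I Hx). intros y _ Hy. symmetry. now apply glue_eq_left.
  - apply ex_derive_n_ext_loc with B; [|apply HB].
    apply (locally_interval _ x lo p_infty ltac:(simpl; lra) I). intros y Hy _.
    symmetry. now apply glue_eq_right.
Qed.

End Glue.

(** * The extension *)

Section Extension.
Variables (f : R -> R) (b d me : R).
Hypothesis d_pos : 0 < d.
Hypothesis f_smooth : smooth f.
Hypothesis f_collar : forall t, b - 8 * d <= t <= b ->
  0 < f t /\ 0 < Derive f t /\ 0 < warped_scal f t /\ 2 * warped_hawking_mass f b < f t.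
Hypothesis me_ge0 : 0 <= me.
Hypothesis hawking_mass_lt_me : warped_hawking_mass f b < me.

Local Notation mb := (warped_hawking_mass f b).

Lemma hawking_mass_smooth : smooth (warped_hawking_mass f).
Proof.
  unfold warped_hawking_mass.
  apply smooth_mult; [apply smooth_div; [intros; lra | exact f_smooth | apply smooth_const]|].
  apply smooth_minus; [apply smooth_const|].
  apply (smooth_comp (fun y => y ^ 2)); [|apply smooth_Derive, f_smooth].
  apply smooth_mult; [apply smooth_id|]. apply smooth_mult; [apply smooth_id | apply smooth_const].
Qed.

Lemma Derive_hawking_mass_collar_pos t : b - 8 * d <= t <= b ->
  0 < Derive (warped_hawking_mass f) t.
Proof.
  intros Ht. destruct (f_collar t Ht) as [Hf [Hf' [Hscal _]]].
  rewrite Derive_warped_hawking_mass by (auto; lra).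
  apply Rdiv_lt_0_compat; [|lra].
  apply Rmult_lt_0_compat; [apply Rmult_lt_0_compat; [exact Hf' | now apply pow_lt] | exact Hscal].
Qed.

Lemma f_le_collar t : b - 8 * d <= t <= b -> f t <= f b.
Proof.
  intros Ht. destruct (mean_value f t b f_smooth (proj2 Ht)) as [z [Hz E]].
  destruct (f_collar z ltac:(lra)) as [_ [Hf' _]]. nra.
Qed.

Lemma hawking_mass_le_collar t : b - 8 * d <= t <= b -> warped_hawking_mass f t <= mb.
Proof.
  intros Ht. destruct (mean_value _ t b hawking_mass_smooth (proj2 Ht)) as [z [Hz E]].
  assert (Hm := Derive_hawking_mass_collar_pos z ltac:(lra)). nra.
Qed.

Lemma hawking_mass_lt_collar t : b - 8 * d <= t <= b -> 2 * warped_hawking_mass f t < f t.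
Proof.
  intros Ht. destruct (f_collar t Ht) as [Hf [Hf' _]]. unfold warped_hawking_mass.
  assert (0 < f t * Derive f t ^ 2) by (apply Rmult_lt_0_compat; [|apply pow_lt]; lra). lra.
Qed.

(* Layout: on [b-8d, b-7d] the radius leaves f for the constant 1, keeping it positive;
   on [b-6d, b-5d] the speed switches from 1 to R' / sqrt (1 - 2M/R); on [b-2d, b-d] the
   mass is frozen at its value at b; on [b-d, b] the radius turns into a line of slope 1;
   on [b+2me, b+2me+1], where the radius exceeds 2me, the mass rises to me. *)
Definition line (t : R) : R := f b + (t - (b - d)).

Definition radius_inner : R -> R := blend (cutoff (b - 8 * d) d) (fun _ => 1) f.

Definition radius : R -> R := blend (cutoff (b - d) d) radius_inner line.

Definition mass_frozen : R -> R := blend (cutoff (b - 2 * d) d) (warped_hawking_mass f) (fun _ => mb).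

Definition mass_inner : R -> R := blend (cutoff (b - 8 * d) d) (fun _ => 0) mass_frozen.

Definition mass : R -> R := blend (cutoff (b + 2 * me) 1) mass_inner (fun _ => me).

Definition slope2 (t : R) : R := 1 - 2 * mass t / radius t.

Definition speed : R -> R :=
  blend (cutoff (b - 6 * d) d) (fun _ => 1) (fun t => Derive radius t / sqrt (slope2 t)).

Definition arclength (t : R) : R := b - 2 * d + RInt speed (b - 2 * d) t.

Lemma line_smooth : smooth line.
Proof.
  unfold line. apply smooth_plus; [apply smooth_const|].
  apply smooth_minus; [apply smooth_id | apply smooth_const].
Qed.

Lemma Derive_line t : Derive line t = 1.
Proof. apply is_derive_unique. unfold line. auto_derive; [exact I | ring]. Qed.

Lemma radius_inner_smooth : smooth radius_inner.
Proof. apply blend_smooth; [apply cutoff_smooth; lra | apply smooth_const | exact f_smooth]. Qed.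

Lemma radius_smooth : smooth radius.
Proof. apply blend_smooth; [apply cutoff_smooth; lra | exact radius_inner_smooth | exact line_smooth]. Qed.

Lemma radius_inner_eq t : b - 7 * d <= t -> radius_inner t = f t.
Proof. intros Ht. apply blend_cutoff_right; lra. Qed.

Lemma radius_inner_pos t : t <= b -> 0 < radius_inner t.
Proof.
  intros Ht. destruct (Rle_dec t (b - 8 * d)).
  - unfold radius_inner. rewrite blend_cutoff_left by lra. lra.
  - apply blend_cutoff_gt; [lra | apply f_collar; lra].
Qed.

Lemma radius_eq_f t : b - 7 * d <= t <= b - d -> radius t = f t.
Proof. intros Ht. unfold radius. rewrite blend_cutoff_left by lra. apply radius_inner_eq. lra. Qed.

Lemma radius_eq_line t : b <= t -> radius t = line t.
Proof. intros Ht. apply blend_cutoff_right; lra. Qed.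

Lemma radius_ge_f t : b - 7 * d <= t <= b -> f t <= radius t.
Proof.
  intros Ht. destruct (Rle_dec t (b - d)); [rewrite radius_eq_f; lra|].
  apply blend_cutoff_ge; [rewrite radius_inner_eq; lra|].
  unfold line. generalize (f_le_collar t ltac:(lra)). lra.
Qed.

Lemma radius_pos t : 0 < radius t.
Proof.
  destruct (Rle_dec t (b - d)); [|destruct (Rle_dec t b)].
  - unfold radius. rewrite blend_cutoff_left by lra. apply radius_inner_pos. lra.
  - apply blend_cutoff_gt; [apply radius_inner_pos; lra|].
    unfold line. destruct (f_collar b ltac:(lra)). lra.
  - rewrite radius_eq_line by lra. unfold line. destruct (f_collar b ltac:(lra)). lra.
Qed.

Lemma Derive_radius_eq1 t : b <= t -> Derive radius t = 1.
Proof.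
  intros Ht. unfold radius. rewrite Derive_blend_cutoff_right; [apply Derive_line | lra | | | lra].
  - exact radius_inner_smooth.
  - exact line_smooth.
Qed.

Lemma Derive_radius_inner_eq t : b - 7 * d <= t -> Derive radius_inner t = Derive f t.
Proof.
  intros Ht. apply Derive_blend_cutoff_right; [lra | apply smooth_const | exact f_smooth | lra].
Qed.

Lemma Derive_radius_pos t : b - 7 * d < t -> 0 < Derive radius t.
Proof.
  intros Ht. destruct (Rle_dec b t); [rewrite Derive_radius_eq1; lra|].
  unfold radius.
  rewrite Derive_blend; [| apply cutoff_smooth; lra | exact radius_inner_smooth | exact line_smooth].
  rewrite Derive_radius_inner_eq, radius_inner_eq, Derive_line by lra.
  destruct (f_collar t ltac:(lra)) as [_ [Hf' _]].
  set (k := cutoff (b - d) d t).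
  assert (Hk : 0 <= k <= 1) by (split; [apply cutoff_ge0 | apply cutoff_le1]).
  assert (Hjump : 0 <= Derive (cutoff (b - d) d) t * (line t - f t)).
  { destruct (Rle_dec t (b - d)); [rewrite Derive_cutoff_eq0; lra|].
    apply Rmult_le_pos; [apply Derive_cutoff_ge0; lra|].
    unfold line. generalize (f_le_collar t ltac:(lra)). lra. }
  assert (0 < (1 - k) * Derive f t + k * 1) by (destruct (Rle_lt_dec k (1 / 2)); nra).
  lra.
Qed.

Lemma mass_frozen_smooth : smooth mass_frozen.
Proof. apply blend_smooth; [apply cutoff_smooth; lra | exact hawking_mass_smooth | apply smooth_const]. Qed.

Lemma mass_inner_smooth : smooth mass_inner.
Proof. apply blend_smooth; [apply cutoff_smooth; lra | apply smooth_const | exact mass_frozen_smooth]. Qed.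

Lemma mass_smooth : smooth mass.
Proof. apply blend_smooth; [apply cutoff_smooth; lra | exact mass_inner_smooth | apply smooth_const]. Qed.

Lemma mass_inner_eq t : b - 7 * d <= t -> mass_inner t = mass_frozen t.
Proof. intros Ht. unfold mass_inner. now rewrite blend_cutoff_right by lra. Qed.

Lemma Derive_mass_inner_eq t : b - 7 * d <= t -> Derive mass_inner t = Derive mass_frozen t.
Proof.
  intros Ht. apply Derive_blend_cutoff_right; [lra | apply smooth_const | exact mass_frozen_smooth | lra].
Qed.

Lemma mass_eq_frozen t : b - 7 * d <= t <= b -> mass t = mass_frozen t.
Proof. intros Ht. unfold mass. rewrite blend_cutoff_left by lra. apply mass_inner_eq. lra. Qed.

Lemma mass_eq_hawking_mass t : b - 7 * d <= t <= b - 2 * d -> mass t = warped_hawking_mass f t.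
Proof. intros Ht. rewrite mass_eq_frozen by lra. apply blend_cutoff_left; lra. Qed.

Lemma mass_eq_far t : b + 2 * me + 1 <= t -> mass t = me.
Proof. intros Ht. apply blend_cutoff_right; lra. Qed.

Lemma Derive_mass_nonneg t : b - 7 * d <= t -> 0 <= Derive mass t.
Proof.
  intros Ht. unfold mass. destruct (Rle_dec t b).
  - rewrite Derive_blend_cutoff_left, Derive_mass_inner_eq by (auto using mass_inner_smooth, smooth_const; lra).
    unfold mass_frozen.
    rewrite Derive_blend by (auto using hawking_mass_smooth, smooth_const; apply cutoff_smooth; lra).
    rewrite Derive_const.
    assert (Hm' := Derive_hawking_mass_collar_pos t ltac:(lra)).
    assert (Hm := hawking_mass_le_collar t ltac:(lra)).
    assert (Hk' := Derive_cutoff_ge0 (b - 2 * d) d ltac:(lra) t).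
    assert (Hk1 := cutoff_le1 (b - 2 * d) d t).
    assert (0 <= (1 - cutoff (b - 2 * d) d t) * Derive (warped_hawking_mass f) t) by nra.
    nra.
  - rewrite Derive_blend by (auto using mass_inner_smooth, smooth_const; apply cutoff_smooth; lra).
    rewrite Derive_mass_inner_eq, mass_inner_eq, Derive_const by lra.
    unfold mass_frozen. rewrite Derive_blend_cutoff_right, Derive_const by
      (auto using hawking_mass_smooth, smooth_const; lra).
    rewrite blend_cutoff_right by lra.
    assert (Hk' := Derive_cutoff_ge0 (b + 2 * me) 1 ltac:(lra) t). nra.
Qed.

Lemma twice_mass_lt_radius t : 2 * mass t < radius t.
Proof.
  destruct (Rle_dec t (b - 2 * d)); [|destruct (Rle_dec t b)].
  - assert (E : radius t - 2 * mass t =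
      blend (cutoff (b - 8 * d) d) (fun _ => 1) (fun u => f u * Derive f u ^ 2) t).
    { unfold radius, mass, radius_inner, mass_inner, mass_frozen, blend.
      rewrite (cutoff_eq0 (b - d) d), (cutoff_eq0 (b + 2 * me) 1), (cutoff_eq0 (b - 2 * d) d) by lra.
      unfold warped_hawking_mass. field. }
    enough (0 < radius t - 2 * mass t) by lra. rewrite E.
    destruct (Rle_dec t (b - 8 * d)); [rewrite blend_cutoff_left; lra|].
    destruct (f_collar t ltac:(lra)) as [Hf [Hf' _]].
    apply blend_cutoff_gt; [lra | apply Rmult_lt_0_compat; [|apply pow_lt]; lra].
  - rewrite mass_eq_frozen by lra.
    assert (f t <= radius t) by (apply radius_ge_f; lra).
    enough (mass_frozen t < f t / 2) by lra.
    apply blend_cutoff_lt.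
    + generalize (hawking_mass_lt_collar t ltac:(lra)). lra.
    + destruct (f_collar t ltac:(lra)) as [_ [_ [_ Hmb]]]. lra.
  - rewrite radius_eq_line by lra.
    assert (Hmid : mass_inner t = mb).
    { rewrite mass_inner_eq by lra. unfold mass_frozen. now rewrite blend_cutoff_right by lra. }
    destruct (f_collar b ltac:(lra)) as [Hfb [_ [_ Hmb]]].
    unfold mass. destruct (Rle_dec t (b + 2 * me)).
    + rewrite blend_cutoff_left, Hmid by lra. unfold line. lra.
    + enough (blend (cutoff (b + 2 * me) 1) mass_inner (fun _ => me) t < line t / 2) by lra.
      apply blend_cutoff_lt; [rewrite Hmid|]; unfold line; lra.
Qed.

Lemma slope2_pos t : 0 < slope2 t.
Proof.
  unfold slope2. assert (HR := radius_pos t). assert (HM := twice_mass_lt_radius t).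
  enough (2 * mass t / radius t < 1) by lra.
  apply Rcomplements.Rlt_div_l; lra.
Qed.

Lemma slope2_smooth : smooth slope2.
Proof.
  apply smooth_minus; [apply smooth_const|].
  apply smooth_div; [intros t; generalize (radius_pos t); lra | | exact radius_smooth].
  apply smooth_mult; [apply smooth_const | exact mass_smooth].
Qed.

Lemma slope2_eq_collar t : b - 7 * d <= t <= b - 2 * d -> slope2 t = Derive f t ^ 2.
Proof.
  intros Ht. unfold slope2. rewrite radius_eq_f, mass_eq_hawking_mass by lra.
  destruct (f_collar t ltac:(lra)) as [Hf _]. unfold warped_hawking_mass. field. lra.
Qed.

Lemma slope2_eq_far t : b + 2 * me + 1 <= t -> slope2 t = 1 - 2 * me / radius t.
Proof. intros Ht. unfold slope2. now rewrite mass_eq_far. Qed.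

Lemma speed_smooth : smooth speed.
Proof.
  apply blend_smooth; [apply cutoff_smooth; lra | apply smooth_const|].
  apply smooth_div; [intros t; generalize (sqrt_lt_R0 _ (slope2_pos t)); lra | |].
  - apply smooth_Derive, radius_smooth.
  - apply smooth_sqrt; [exact slope2_pos | exact slope2_smooth].
Qed.

Lemma speed_eq t : b - 5 * d <= t -> speed t = Derive radius t / sqrt (slope2 t).
Proof. intros Ht. unfold speed. now rewrite blend_cutoff_right by lra. Qed.

Lemma speed_eq1 t : t <= b - 2 * d -> speed t = 1.
Proof.
  intros Ht. unfold speed.
  destruct (Rle_dec t (b - 6 * d)); [now rewrite blend_cutoff_left by lra|].
  assert (HD : Derive radius t = Derive f t).
  { apply (Derive_ext_interval _ _ (b - 7 * d) (b - d)); simpl; try lra.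
    intros y Hy1 Hy2. apply radius_eq_f. lra. }
  destruct (f_collar t ltac:(lra)) as [_ [Hf' _]].
  unfold blend. rewrite HD, slope2_eq_collar, sqrt_pow2 by lra. field. lra.
Qed.

Lemma speed_pos t : 0 < speed t.
Proof.
  destruct (Rle_dec t (b - 6 * d)); [rewrite speed_eq1; lra|].
  apply blend_cutoff_gt; [lra|].
  apply Rdiv_lt_0_compat; [apply Derive_radius_pos; lra | apply sqrt_lt_R0, slope2_pos].
Qed.

Lemma speed_ge1 t : b + 2 * me + 1 <= t -> 1 <= speed t.
Proof.
  intros Ht. rewrite speed_eq, Derive_radius_eq1 by lra.
  assert (HW := slope2_pos t). rewrite slope2_eq_far in * by lra.
  assert (Hs : sqrt (1 - 2 * me / radius t) <= 1).
  { rewrite <- sqrt_1 at 2. apply sqrt_le_1_alt.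
    generalize (Rle_mult_inv_pos _ _ me_ge0 (radius_pos t)). unfold Rdiv. lra. }
  assert (0 < sqrt (1 - 2 * me / radius t)) by (apply sqrt_lt_R0; exact HW).
  apply Rcomplements.Rle_div_r; lra.
Qed.

Lemma is_derive_arclength t : is_derive arclength t (speed t).
Proof. apply is_derive_primitive, speed_smooth. Qed.

Lemma arclength_smooth : smooth arclength.
Proof. exact (smooth_of_derive _ _ speed_smooth is_derive_arclength). Qed.

Lemma Derive_arclength t : Derive arclength t = speed t.
Proof. apply is_derive_unique, is_derive_arclength. Qed.

Lemma arclength_eq t : t <= b - 2 * d -> arclength t = t.
Proof.
  apply (eq_id_of_Derive_eq1 _ _ arclength_smooth).
  - unfold arclength. rewrite RInt_point. unfold zero. simpl. ring.
  - intros u Hu. rewrite Derive_arclength. now apply speed_eq1.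
Qed.

Lemma arclength_surjective s : exists t, arclength t = s.
Proof.
  apply (surjective_of_Derive_ge1 _ (b - 2 * d) (b + 2 * me + 1) arclength_smooth).
  intros t [Ht | Ht]; rewrite Derive_arclength; [rewrite speed_eq1 by exact Ht; lra | now apply speed_ge1].
Qed.

Lemma arclength_lt t u : t < u -> arclength t < arclength u.
Proof.
  apply strict_incr_of_Derive_pos; [exact arclength_smooth|].
  intros v. rewrite Derive_arclength. apply speed_pos.
Qed.

Lemma arclength_far_gt : b - 2 * d < arclength (b + 2 * me + 1).
Proof. rewrite <- (arclength_eq (b - 2 * d)) at 1 by lra. apply arclength_lt. lra. Qed.

Section Profile.
Variable T : R -> R.
Hypothesis T_smooth : smooth T.
Hypothesis arclength_T : forall x, arclength (T x) = x.
Hypothesis T_arclength : forall t, T (arclength t) = t.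
Hypothesis Derive_T : forall x, Derive T x = / speed (T x).

Definition profile (x : R) : R := radius (T x).

Lemma T_le x y : x <= y -> T x <= T y.
Proof.
  intros Hxy. destruct (Rle_dec (T x) (T y)) as [|H]; [assumption|].
  assert (arclength (T y) < arclength (T x)) by (apply arclength_lt; lra).
  rewrite !arclength_T in *. lra.
Qed.

Lemma T_eq x : x <= b - 2 * d -> T x = x.
Proof. intros Hx. rewrite <- (arclength_eq x) at 1 by exact Hx. apply T_arclength. Qed.

Lemma T_ge x : b - 5 * d <= x -> b - 5 * d <= T x.
Proof. intros Hx. rewrite <- (T_eq (b - 5 * d)) by lra. now apply T_le. Qed.

Lemma profile_smooth : smooth profile.
Proof. exact (smooth_comp _ _ radius_smooth T_smooth). Qed.

Lemma profile_eq_f x : b - 7 * d <= x <= b - 2 * d -> profile x = f x.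
Proof. intros Hx. unfold profile. rewrite T_eq by lra. apply radius_eq_f. lra. Qed.

Lemma profile_pos x : 0 < profile x.
Proof. apply radius_pos. Qed.

Lemma Derive_profile x : b - 5 * d <= x -> Derive profile x = sqrt (slope2 (T x)).
Proof.
  intros Hx. assert (HT := T_ge x Hx). unfold profile.
  rewrite Derive_comp by (apply smooth_ex_derive; auto using radius_smooth).
  rewrite Derive_T, speed_eq by exact HT.
  assert (HR := Derive_radius_pos (T x) ltac:(lra)).
  assert (HW := sqrt_lt_R0 _ (slope2_pos (T x))). field. lra.
Qed.

Lemma profile_hawking_mass x : b - 5 * d <= x -> warped_hawking_mass profile x = mass (T x).
Proof.
  intros Hx. unfold warped_hawking_mass. rewrite Derive_profile, pow2_sqrt by (auto; apply Rlt_le, slope2_pos).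
  unfold slope2, profile. assert (HR := radius_pos (T x)). field. lra.
Qed.

Lemma profile_scal_nonneg x : b - 5 * d < x -> 0 <= warped_scal profile x.
Proof.
  intros Hx. apply warped_scal_nonneg_of_hawking_mass; [exact profile_smooth | apply profile_pos | |].
  - rewrite Derive_profile by lra. apply sqrt_lt_R0, slope2_pos.
  - rewrite (Derive_ext_interval _ (fun y => mass (T y)) (b - 5 * d) p_infty) by
      (simpl; auto; intros y Hy _; apply profile_hawking_mass; lra).
    rewrite Derive_comp by (apply smooth_ex_derive; auto using mass_smooth).
    rewrite Derive_T. apply Rmult_le_pos; [apply Rlt_le, Rinv_0_lt_compat, speed_pos|].
    apply Derive_mass_nonneg. generalize (T_ge x ltac:(lra)). lra.
Qed.

Lemma profile_schwarzschild_end : schwarzschild_end me profile (arclength (b + 2 * me + 1)).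
Proof.
  intros x Hx.
  assert (HT : b + 2 * me + 1 <= T x) by (rewrite <- (T_arclength (b + 2 * me + 1)); now apply T_le).
  assert (Hx5 : b - 5 * d <= x) by (generalize arclength_far_gt; lra).
  assert (HM := twice_mass_lt_radius (T x)). rewrite mass_eq_far in HM by exact HT.
  split; [exact HM|].
  rewrite Derive_profile by exact Hx5. now rewrite slope2_eq_far.
Qed.

End Profile.

Lemma extension : exists P : R -> R,
  smooth P /\
  (forall x, x < b - 2 * d ->
     P x = f x /\ Derive P x = Derive f x /\ warped_scal P x = warped_scal f x) /\
  (forall x, b - 2 * d <= x -> 0 < P x /\ 0 < Derive P x /\ 0 <= warped_scal P x) /\
  (exists x0, schwarzschild_end me P x0).
Proof.
  assert (Hpos : forall t, 0 < Derive arclength t) by (intros t; rewrite Derive_arclength; apply speed_pos).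
  destruct (smooth_inverse arclength arclength_smooth Hpos arclength_surjective)
    as [T [HT [HST [HTS HDT]]]].
  assert (HDT' : forall x, Derive T x = / speed (T x)) by (intros x; now rewrite HDT, Derive_arclength).
  set (F := profile T).
  assert (Hglue : forall x, b - 7 * d < x < b - 2 * d -> f x = F x).
  { intros x Hx. symmetry. apply (profile_eq_f T); auto. lra. }
  set (P := glue f F (b - 3 * d)).
  assert (Hcut : b - 7 * d < b - 3 * d < b - 2 * d) by lra.
  assert (HPl : forall x, x < b - 2 * d -> P x = f x) by exact (glue_eq_left _ _ _ _ _ Hcut Hglue).
  assert (HPr : forall x, b - 7 * d < x -> P x = F x) by exact (glue_eq_right _ _ _ _ _ Hcut Hglue).
  exists P. split; [|split; [|split]].
  - apply (smooth_glue _ _ _ _ _ Hcut Hglue f_smooth), profile_smooth, HT.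
  - intros x Hx. split; [now apply HPl|].
    split; [apply (Derive_ext_interval _ _ m_infty (b - 2 * d))
           | apply (warped_scal_ext_interval _ _ m_infty (b - 2 * d))];
      simpl; auto; intros y _ Hy; now apply HPl.
  - intros x Hx.
    rewrite HPr, (Derive_ext_interval P F (b - 7 * d) p_infty),
      (warped_scal_ext_interval P F (b - 7 * d) p_infty);
      simpl; auto; try lra; try (intros y Hy _; apply HPr; exact Hy).
    split; [apply profile_pos|]. split.
    + unfold F. rewrite Derive_profile; auto; [apply sqrt_lt_R0, slope2_pos | lra].
    + unfold F. apply profile_scal_nonneg; auto. lra.
  - exists (arclength (b + 2 * me + 1)). intros x Hx.
    assert (Hx2 := arclength_far_gt).
    rewrite HPr, (Derive_ext_interval P F (b - 7 * d) p_infty); simpl; auto; try lra;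
      try (intros y Hy _; apply HPr; exact Hy).
    now apply profile_schwarzschild_end.
Qed.

End Extension.

Lemma collar_choice a b f : a < b -> smooth f ->
  (forall s, a <= s <= b -> 0 < f s) -> (forall s, a <= s <= b -> 0 < warped_scal f s) ->
  0 < warped_mean_curv f b ->
  exists d, 0 < d /\ 8 * d <= b - a /\ forall t, b - 8 * d <= t <= b ->
    0 < f t /\ 0 < Derive f t /\ 0 < warped_scal f t /\ 2 * warped_hawking_mass f b < f t.
Proof.
  intros Hab Hf Hpos Hscal Hmc. assert (Hfb : 0 < f b) by (apply Hpos; lra).
  assert (Hp : 0 < Derive f b).
  { unfold warped_mean_curv in Hmc.
    replace (Derive f b) with (2 * Derive f b / f b * f b / 2) by (field; lra).
    apply Rdiv_lt_0_compat; [apply Rmult_lt_0_compat|]; lra. }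
  destruct (smooth_near (Derive f) b (Derive f b) (smooth_Derive f Hf) Hp) as [d1 [Hd1 H1]].
  destruct (smooth_near f b (f b * Derive f b ^ 2) Hf) as [d2 [Hd2 H2]];
    [apply Rmult_lt_0_compat; [|apply pow_lt]; lra|].
  set (d := Rmin (Rmin d1 d2) (b - a) / 9).
  assert (Hmin1 := Rmin_l (Rmin d1 d2) (b - a)). assert (Hmin2 := Rmin_r (Rmin d1 d2) (b - a)).
  assert (Hmin3 := Rmin_l d1 d2). assert (Hmin4 := Rmin_r d1 d2).
  assert (Hd : 0 < d) by (apply Rdiv_lt_0_compat; [repeat apply Rmin_glb_lt|]; lra).
  exists d. split; [exact Hd | split; [unfold d in *; lra|]].
  intros t Ht. assert (Htb : Rabs (t - b) < Rmin d1 d2) by (rewrite Rabs_left1; unfold d in *; lra).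
  specialize (H1 t ltac:(lra)). specialize (H2 t ltac:(lra)).
  apply Rabs_def2 in H1. apply Rabs_def2 in H2.
  split; [apply Hpos; unfold d in *; lra|]. split; [lra|]. split; [apply Hscal; unfold d in *; lra|].
  unfold warped_hawking_mass. lra.
Qed.

Theorem proposition2p2 (a b : R) (f : R -> R) :
  a < b ->
  smooth f ->
  (forall s, a <= s <= b -> 0 < f s) ->
  (forall s, a <= s <= b -> 0 < warped_scal f s) ->
  0 < warped_mean_curv f b ->
  0 <= warped_hawking_mass f b ->
  forall me : R, warped_hawking_mass f b < me ->
  exists F : R -> R,
    smooth F /\
    (forall s, 0 <= s -> 0 < F s) /\
    (forall s, 0 <= s -> 0 <= warped_scal F s) /\
    (exists s0, 0 <= s0 /\ schwarzschild_end me F s0) /\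
    (forall s, 0 <= s < (b - a) / 2 -> F s = f (a + s)) /\
    ((forall s, a <= s <= b -> 0 < Derive f s) ->
       forall s, 0 <= s -> 0 < warped_mean_curv F s).
Proof.
  intros Hab Hf Hpos Hscal Hmc Hm0 me Hme.
  destruct (collar_choice a b f Hab Hf Hpos Hscal Hmc) as [d [Hd [Hda Hcollar]]].
  destruct (extension f b d me Hd Hf Hcollar ltac:(lra) Hme) as [P [HP [Hleft [Hright [x0 Hend]]]]].
  exists (fun s => P (a + s)). split; [|split; [|split; [|split]]].
  - now apply smooth_shift.
  - intros s Hs. destruct (Rlt_dec (a + s) (b - 2 * d)) as [Hl | Hr].
    + rewrite (proj1 (Hleft _ Hl)). apply Hpos. lra.
    + apply Hright. lra.
  - intros s Hs. rewrite warped_scal_shift by exact HP.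
    destruct (Rlt_dec (a + s) (b - 2 * d)) as [Hl | Hr].
    + rewrite (proj2 (proj2 (Hleft _ Hl))). apply Rlt_le, Hscal. lra.
    + apply Hright. lra.
  - exists (Rmax 0 (x0 - a)). split; [apply Rmax_l|]. intros s Hs.
    rewrite Derive_shift by exact HP. apply Hend. generalize (Rmax_r 0 (x0 - a)). lra.
  - split; [intros s Hs; apply Hleft; lra|].
    intros Hf' s Hs. unfold warped_mean_curv. rewrite Derive_shift by exact HP.
    destruct (Rlt_dec (a + s) (b - 2 * d)) as [Hl | Hr].
    + destruct (Hleft _ Hl) as [-> [-> _]].
      apply Rdiv_lt_0_compat; [apply Rmult_lt_0_compat, Hf' | apply Hpos]; lra.
    + destruct (Hright (a + s) ltac:(lra)) as [HP0 [HP1 _]]. apply Rdiv_lt_0_compat; lra.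
Qed.
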